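(* Let $(X,\mu)$ be a Lebesgue space with a continuous probability measure $\mu$, and let $\rho_1,\rho_2$ be admissible metrics on $X$ that coincide $(\mu\times\mu)$-almost everywhere on $X\times X$. Then there exists a subset $X'\subset X$ of full $\mu$-measure such that $\rho_1(x,y)=\rho_2(x,y)$ for all $x,y\in X'$.
   Context: A metric on a Lebesgue space is admissible if its restriction to some set of full measure is a separable metric space. *)

From HB Require Import structures.
From mathcomp Require Import all_boot all_order all_algebra.
From mathcomp Require Import all_classical all_reals all_analysis.
Set Implicit Arguments. Unset Strict Implicit. Unset Printing Implicit Defensive.
Import Order.TTheory GRing.Theory Num.Theory.
Local Open Scope classical_set_scope.
Local Open Scope ring_scope.

Definition is_metric (T : Type) (R : realType) (rho : T -> T -> R) : Prop :=
  [/\ forall x y, 0 <= rho x y,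
      forall x y, rho x y = 0 <-> x = y,
      forall x y, rho x y = rho y x &
      forall x y z, rho x z <= rho x y + rho y z].

Definition separable_on (T : Type) (R : realType) (rho : T -> T -> R) (S : set T) : Prop :=
  exists D : set T, [/\ D `<=` S, countable D &
    forall x, S x -> forall e : R, 0 < e -> exists2 z, D z & rho x z < e].

Definition full_measure d (T : measurableType d) (R : realType)
  (mu : set T -> \bar R) (S : set T) : Prop :=
  measurable S /\ mu (~` S) = 0%E.

Definition admissible_metric d (T : measurableType d) (R : realType)
  (mu : set T -> \bar R) (rho : T -> T -> R) : Prop :=
  [/\ is_metric rho,
      measurable_fun [set: T * T] (fun p : T * T => rho p.1 p.2) &
      exists S : set T, full_measure mu S /\ separable_on rho S].

(* (T, mu) is a Lebesgue space with continuous measure: it is isomorphic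
   mod 0 to the unit interval [0,1] with Lebesgue measure, i.e. there are
   full-measure sets X0 in T and Y0 in [0,1] and a bijection f : X0 -> Y0,
   bi-measurable and measure preserving. *)
Definition lebesgue_space_iso d (T : measurableType d) (R : realType)
  (mu : set T -> \bar R) : Prop :=
  exists (X0 : set T) (Y0 : set R) (f : T -> R),
    [/\ full_measure mu X0,
        measurable Y0 /\ Y0 `<=` `[0, 1],
        (lebesgue_measure : set R -> \bar R) (`[0, 1] `\` Y0) = 0%E,
        set_bij X0 Y0 f &
        measurable_fun X0 f /\
        forall A : set T, measurable A ->
          measurable (f @` (X0 `&` A)) /\
          mu (X0 `&` A) = (lebesgue_measure : set R -> \bar R) (f @` (X0 `&` A))].

Definition continuous_measure d (T : measurableType d) (R : realType)
  (mu : set T -> \bar R) : Prop :=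
  forall x : T, exists A : set T, [/\ measurable A, A x & mu A = 0%E].

From HB Require Import structures.
From mathcomp Require Import all_boot all_order all_algebra.
From mathcomp Require Import all_classical all_reals all_analysis.
From mathcomp Require Import lra.
Import Order.TTheory GRing.Theory Num.Theory.
Local Open Scope classical_set_scope.
Local Open Scope ring_scope.

(* Let N be the null set of pairs where rho1 and rho2 differ. By Fubini, the
   section N_x is null for almost every x. Separability gives countably many
   sets of the form {z | rho1 c1 z < r /\ rho2 c2 z < r} that form a basis of
   neighbourhoods of the points of S1 `&` S2; discarding the null ones discards
   a null set of points, and each remaining y has joint neighbourhoods of
   positive measure, so arbitrarily close to y there is z with (x, z) outside
   N, whence rho1 x y = rho2 x y by the triangle inequality. *)

Lemma countable_range_cover {T : Type} (t0 : T) {D : set T} :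
  countable D -> exists g : nat -> T, D `<=` range g.
Proof.
move=> /countable_injP[f injf]; exists ('pinv_(fun=> t0) D f) => x Dx.
by exists (f x) => //; rewrite pinvKV // inE.
Qed.

Section full_measure.
Context {d} {T : measurableType d} {R : realType} (mu : {measure set T -> \bar R}).

Lemma full_measureC (N : set T) :
  measurable N -> mu N = 0%E -> full_measure mu (~` N).
Proof. by move=> mN N0; split; [exact: measurableC|rewrite setCK]. Qed.

Lemma full_measureI (A B : set T) :
  full_measure mu A -> full_measure mu B -> full_measure mu (A `&` B).
Proof.
move=> [mA A0] [mB B0]; split; first exact: measurableI.
by rewrite setCI measureU0 //; exact: measurableC.
Qed.

Lemma measure_gt0_notin_null {A N : set T} :
  measurable A -> measurable N -> (0 < mu A)%E -> mu N = 0%E ->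
  exists2 z, A z & ~ N z.
Proof.
move=> mA mN A0 N0; apply: contrapT => noz.
have AN : A `<=` N by move=> z Az; apply: contrapT => Nz; apply: noz; exists z.
by move: A0; rewrite -N0 ltNge le_measure // inE.
Qed.

End full_measure.

Lemma ae_xsection_null {d1 d2} {T1 : measurableType d1} {T2 : measurableType d2}
  {R : realType} (m1 : {measure set T1 -> \bar R})
  (m2 : {sigma_finite_measure set T2 -> \bar R}) {N : set (T1 * T2)} :
  measurable N -> (m1 \x m2)%E N = 0%E ->
  {ae m1, forall x, m2 (xsection N x) = 0%E}.
Proof.
move=> mN N0.
have int0 : (\int[m1]_(x in [set: T1]) `|m2 (xsection N x)| = 0)%E.
  by rewrite -N0; apply: eq_integral => x _; rewrite gee0_abs.
have := (ae_eq_integral_abs m1 measurableT (measurable_fun_xsection m2 mN)).1 int0.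
by apply: filterS => x; apply.
Qed.

Lemma measurable_metric_ball {d} {T : measurableType d} {R : realType}
  {rho : T -> T -> R} (c : T) (r : R) :
  measurable_fun [set: T * T] (fun p : T * T => rho p.1 p.2) ->
  measurable [set z | rho c z < r].
Proof.
move=> mrho.
have := measurableT_comp mrho (pair1_measurable c) measurableT
  (measurable_itv `]-oo, r[).
by rewrite setTI; congr measurable; apply/seteqP; split => z /=; rewrite in_itv.
Qed.

Lemma metric_diff_le {T : Type} {R : realType} {rho1 rho2 : T -> T -> R} :
  is_metric rho1 -> is_metric rho2 -> forall x y z,
  `|rho1 x y - rho2 x y| <= `|rho1 x z - rho2 x z| + rho1 y z + rho2 y z.
Proof.
move=> [_ _ s1 t1] [_ _ s2 t2] x y z.
have := t1 x y z; have := t1 x z y; have := s1 z y.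
have := t2 x y z; have := t2 x z y; have := s2 z y.
have := ler_norm (rho1 x z - rho2 x z).
have := ler_norm (- (rho1 x z - rho2 x z)); rewrite normrN.
by rewrite ler_norml; lra.
Qed.

Section joint_support.
Context {d} {T : measurableType d} {R : realType} (mu : {measure set T -> \bar R}).
Context {rho1 rho2 : T -> T -> R} {S1 S2 : set T}.
Hypotheses (metric1 : is_metric rho1) (metric2 : is_metric rho2).
Hypothesis mrho1 : measurable_fun [set: T * T] (fun p : T * T => rho1 p.1 p.2).
Hypothesis mrho2 : measurable_fun [set: T * T] (fun p : T * T => rho2 p.1 p.2).
Hypotheses (sep1 : separable_on rho1 S1) (sep2 : separable_on rho2 S2).

Definition joint_ball (y : T) (e : R) := [set z | rho1 y z < e /\ rho2 y z < e].

Lemma measurable_joint_ball y e : measurable (joint_ball y e).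
Proof.
by apply: measurableI; [exact: measurable_metric_ball mrho1|
  exact: measurable_metric_ball mrho2].
Qed.

Lemma joint_ball_triangle {y c1 c2 e z} :
  rho1 y c1 < e -> rho2 y c2 < e ->
  rho1 c1 z < e -> rho2 c2 z < e -> joint_ball y (e *+ 2) z.
Proof.
case: metric1 metric2 => [_ _ _ t1] [_ _ _ t2] y1 y2 z1 z2; split.
- by rewrite mulr2n (le_lt_trans (t1 y c1 z)) // ltrD.
- by rewrite mulr2n (le_lt_trans (t2 y c2 z)) // ltrD.
Qed.

Lemma ae_joint_support :
  {ae mu, forall y, S1 y -> S2 y -> forall e, 0 < e -> (0 < mu (joint_ball y e))%E}.
Proof.
have [[t0 _]|T0] := pselect (exists t : T, True); last first.
  by exists set0; split => // y; exfalso; apply: T0; exists y.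
case: sep1 sep2 => [D1 [_ cD1 dD1]] [D2 [_ cD2 dD2]].
have [g1 g1D1] := countable_range_cover t0 cD1.
have [g2 g2D2] := countable_range_cover t0 cD2.
pose A i j n := [set z | rho1 (g1 i) z < n.+1%:R^-1 /\ rho2 (g2 j) z < n.+1%:R^-1].
pose B := \bigcup_i \bigcup_j \bigcup_n
  (if mu (A i j n) == 0%E then A i j n else set0).
have mA i j n : measurable (A i j n).
  by apply: measurableI; exact: measurable_metric_ball.
have [N [mN N0 BN]] : mu.-negligible B.
  apply: negligible_bigcup => i; apply: negligible_bigcup => j.
  apply: negligible_bigcup => n; case: eqP => [A0|_].
    exact/negligibleP.
  exact: negligible_set0.
exists N; split => // y /= ySupp; apply: BN; apply: contrapT => By.
apply: ySupp => S1y S2y e e0.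
have [n] : exists n : nat, n.+1%:R^-1 *+ 2 < e.
  have [n] := ltr_add_invr (divr_gt0 e0 (ltr0n R 2)).
  by rewrite add0r ltr_pdivlMr // mulr_natr; exists n.
set r := n.+1%:R^-1 => re; have r0 : 0 < r by rewrite invr_gt0.
have [_ /g1D1 [i _ <-] y1] := dD1 y S1y r r0.
have [_ /g2D2 [j _ <-] y2] := dD2 y S2y r r0.
case: metric1 metric2 => [_ _ s1 _] [_ _ s2 _].
have Ay : A i j n y by split; rewrite /= 1?s1 1?s2.
have A0 : mu (A i j n) != 0%E.
  apply/eqP => A0; apply: By.
  by exists i => //; exists j => //; exists n; rewrite ?A0 ?eqxx.
rewrite (@lt_le_trans _ _ (mu (A i j n))) //.
  by rewrite lt0e A0 measure_ge0.
apply: le_measure; rewrite ?inE //; first exact: measurable_joint_ball.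
move=> z [z1 z2]; have [w1 w2] := joint_ball_triangle y1 y2 z1 z2.
by split; apply: lt_trans re.
Qed.

Lemma metrics_eq_off_null_section {N : set (T * T)} {x y : T} :
  measurable N -> (forall p, ~ N p -> rho1 p.1 p.2 = rho2 p.1 p.2) ->
  mu (xsection N x) = 0%E ->
  (forall e, 0 < e -> (0 < mu (joint_ball y e))%E) ->
  rho1 x y = rho2 x y.
Proof.
move=> mN rhoN Nx0 ysupp; apply/eqP; rewrite -subr_eq0 -normr_le0.
apply/ler_addgt0Pr => e e0; rewrite add0r.
have [z [z1 z2] Nxz] := measure_gt0_notin_null mu
  (measurable_joint_ball y (e / 2)) (measurable_xsection x mN)
  (ysupp _ (divr_gt0 e0 (ltr0n R 2))) Nx0.
have eqz : rho1 x z = rho2 x z.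
  by apply: (rhoN (x, z)) => Nz; apply: Nxz; rewrite /xsection /= inE.
apply: le_trans (metric_diff_le metric1 metric2 x y z) _.
by rewrite eqz subrr normr0; lra.
Qed.

End joint_support.

Theorem mainTheorem3 (d : measure_display) (T : measurableType d) (R : realType)
  (mu : probability T R)
  (HLeb : lebesgue_space_iso mu) (Hcont : continuous_measure mu)
  (rho1 rho2 : T -> T -> R)
  (H1 : admissible_metric mu rho1) (H2 : admissible_metric mu rho2)
  (Hae : {ae (mu \x mu)%E, forall p : T * T, rho1 p.1 p.2 = rho2 p.1 p.2}) :
  exists X' : set T, full_measure mu X' /\
    forall x y, X' x -> X' y -> rho1 x y = rho2 x y.
Proof.
case: H1 => [metric1 mrho1 [S1 [fS1 sep1]]].
case: H2 => [metric2 mrho2 [S2 [fS2 sep2]]].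
case: Hae => N [mN N0 rhoN].
have [M [mM M0 sectM]] := ae_xsection_null mu mu mN N0.
have [B [mB B0 suppB]] :=
  ae_joint_support mu metric1 metric2 mrho1 mrho2 sep1 sep2.
exists (S1 `&` S2 `&` ~` M `&` ~` B); split.
  by do !apply: full_measureI => //; exact: full_measureC.
move=> x y [[[_ _] Mx] _] [[[S1y S2y] _] By].
apply: (metrics_eq_off_null_section mu metric1 metric2 mrho1 mrho2 mN).
- by move=> p Np; apply: contrapT => neq; exact/Np/rhoN.
- by apply: contrapT => Nx; apply: Mx; apply: sectM.
- by apply: contrapT => ny; apply: By; apply: suppB => /(_ S1y S2y).
Qed.
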